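(* Let $1\le k\le n$ and $p=c_n^k$. Suppose $X$ is a real symmetric $n\times n$ matrix given together with a diagonalization $X=Q\Lambda Q^{\intercal}$ ($Q$ orthogonal, $\Lambda$ diagonal). Then there is an algorithm that computes the vector $v\in\mathbb{R}^n$ with $v_i=p|_{\{i\}}(X)$ for all $i\in[n]$ using $O(n^{\omega})$ floating point operations.
   Context: $c_n^k(X)=\sum_{S\subseteq[n],|S|=k}\det(X|_S)$ with $X|_S$ the principal submatrix indexed by $S$; $p|_{\{i\}}(X)=\sum_{|S|=k,\,i\in S}\det(X|_S)$. $\omega$ is the matrix multiplication exponent. *)

From HB Require Import structures.
From mathcomp Require Import all_boot all_order all_algebra all_fingroup.
From mathcomp Require Import reals exp.
Set Implicit Arguments. Unset Strict Implicit. Unset Printing Implicit Defensive.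
Import Order.TTheory GRing.Theory Num.Theory.
Local Open Scope ring_scope.

Definition principal_submx (R : pzRingType) (n : nat) (X : 'M[R]_n)
  (S : {set 'I_n}) : 'M[R]_#|S| :=
  mxsub (@enum_val _ (mem S)) (@enum_val _ (mem S)) X.

Definition char_coef (R : comPzRingType) (n k : nat) (X : 'M[R]_n) : R :=
  \sum_(S : {set 'I_n} | #|S| == k) \det (principal_submx X S).

(* p|_{i}(X) = sum_{|S| = k, i in S} det(X|_S), for p = c_n^k *)
Definition char_coef_restr (R : comPzRingType) (n k : nat) (i : 'I_n)
  (X : 'M[R]_n) : R :=
  \sum_(S : {set 'I_n} | (#|S| == k) && (i \in S)) \det (principal_submx X S).

(* References to earlier values are by position; out-of-range references
   read 0 (as does division by zero, by the MathComp convention x/0 = 0).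
   Every instruction counts as one floating point operation. *)
Inductive instr (R : Type) : Type :=
| IConst of R
| IInput of nat
| IAdd of nat & nat
| ISub of nat & nat
| IMul of nat & nat
| IDiv of nat & nat.

Record slp (R : Type) : Type := SLP { slp_code : seq (instr R); slp_out : seq nat }.

Definition step (R : fieldType) (inp acc : seq R) (c : instr R) : R :=
  match c with
  | IConst x => x
  | IInput j => nth 0 inp j
  | IAdd a b => nth 0 acc a + nth 0 acc b
  | ISub a b => nth 0 acc a - nth 0 acc b
  | IMul a b => nth 0 acc a * nth 0 acc b
  | IDiv a b => nth 0 acc a / nth 0 acc b
  end.

Fixpoint run (R : fieldType) (inp : seq R) (code : seq (instr R)) (acc : seq R)
  : seq R :=
  match code with
  | [::] => acc
  | c :: code' => run inp code' (rcons acc (step inp acc c))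
  end.

Definition slp_eval (R : fieldType) (P : slp R) (inp : seq R) : seq R :=
  let vals := run inp (slp_code P) [::] in
  [seq nth 0 vals j | j <- slp_out P].

Definition slp_cost (R : Type) (P : slp R) : nat := size (slp_code P).

(* row-major list of the entries of a matrix *)
Definition mx_entries (R : Type) (m n : nat) (A : 'M[R]_(m, n)) : seq R :=
  [seq A ij.1 ij.2 | ij <- (enum {: 'I_m * 'I_n})].

(* tau is an achievable matrix multiplication exponent over R:
   n x n matrices can be multiplied with O(n^tau) operations.
   omega is the infimum of such tau; "O(n^omega)" is read as
   "O(n^tau) for every achievable tau". *)
Definition mm_exponent (R : realType) (tau : R) : Prop :=
  exists C : R, forall n : nat, (1 <= n)%N ->
    exists P : slp R,
      (forall A B : 'M[R]_n,
         slp_eval P (mx_entries A ++ mx_entries B) = mx_entries (A *m B)) /\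
      (slp_cost P)%:R <= C * powR n%:R tau.

From HB Require Import structures.
From mathcomp Require Import all_boot all_order all_algebra all_fingroup.
From mathcomp Require Import reals exp.
From mathcomp Require Import zify ring.
Set Implicit Arguments. Unset Strict Implicit. Unset Printing Implicit Defensive.
Import Order.TTheory GRing.Theory Num.Theory.
Local Open Scope ring_scope.

(** Let [E_i] be the identity matrix with its [i]-th diagonal entry replaced by 0.
    Expanding [det (E_i + x X)] over principal minors gives
    [p|_{i}(X) = [x^k] det (E_i + x X)]. If [X = Q Λ Q^T] with [Q] orthogonal, then
    [E_i + x X = Q D Q^T - e_i e_i^T] with [D = diag (1 + λ_j x)], so the determinant is
    [det D - cof_ii (Q D Q^T)]. The adjugate of [Q D Q^T] is [Q (adj D) Q^T], and the
    rows of [Q] have norm 1, whence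
    [det (E_i + x X) = Σ_j Q_ij^2 λ_j x ∏_{l <> j} (1 + λ_l x)].
    A straight-line program computes the coefficients of [∏_l (1 + λ_l x)] with O(n^2)
    operations, each [t_j = λ_j [x^(k-1)] ∏_{l <> j} (1 + λ_l x)] from them by synthetic
    division by [1 + λ_j x] with O(n) more, and the sums [Σ_j Q_ij^2 t_j] with O(n^2).
    Any program multiplying [n x n] matrices has at least [n^2] instructions: on the
    inputs [e_i e_1^T] and [e_1 e_j^T] only the output for the entry [(i, j)] is 1, so the
    [n^2] outputs are read from pairwise distinct instructions. Hence O(n^2) is O(n^τ)
    for every achievable exponent [τ]. *)

Section ExtendPerm.
Variables (n : nat) (S : {set 'I_n}).
Local Notation sv := (@enum_val _ (mem S)).

Variant in_sub_spec (i : 'I_n) : Prop :=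
  | InSub x of i = sv x
  | OutSub of i \notin S.

Lemma in_subP i : in_sub_spec i.
Proof.
have [iS|] := boolP (i \in S); last by right.
by apply: (@InSub _ (enum_rank_in iS i)); rewrite enum_rankK_in.
Qed.

Definition ext_perm_fun (t : 'S_#|S|) (i : 'I_n) : 'I_n :=
  if [pick x | sv x == i] is Some x then sv (t x) else i.

Lemma ext_perm_fun_val t x : ext_perm_fun t (sv x) = sv (t x).
Proof.
rewrite /ext_perm_fun; case: pickP => [y /eqP/enum_val_inj -> // |].
by move/(_ x); rewrite eqxx.
Qed.

Lemma ext_perm_fun_out t i : i \notin S -> ext_perm_fun t i = i.
Proof.
rewrite /ext_perm_fun => iS; case: pickP => // y /eqP Ey.
by move: iS; rewrite -Ey enum_valP.
Qed.

Lemma ext_perm_fun_inj t : injective (ext_perm_fun t).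
Proof.
move=> i j; case: (in_subP i) => [x ->|iS]; case: (in_subP j) => [y ->|jS];
  rewrite ?ext_perm_fun_val ?ext_perm_fun_out //.
- by move/enum_val_inj/perm_inj ->.
- by move=> E; move: jS; rewrite -E enum_valP.
- by move=> E; move: iS; rewrite E enum_valP.
Qed.

Definition ext_perm t : 'S_n := perm (@ext_perm_fun_inj t).

Lemma ext_perm_val t x : ext_perm t (sv x) = sv (t x).
Proof. by rewrite permE ext_perm_fun_val. Qed.

Lemma ext_perm_out t i : i \notin S -> ext_perm t i = i.
Proof. by move=> iS; rewrite permE ext_perm_fun_out. Qed.

Lemma eq_ext_perm (t : 'S_#|S|) (s : 'S_n) :
  (forall x, s (sv x) = sv (t x)) -> (forall i, i \notin S -> s i = i) -> ext_perm t = s.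
Proof.
move=> sS sO; apply/permP => i; case: (in_subP i) => [x ->|iS].
  by rewrite ext_perm_val sS.
by rewrite ext_perm_out ?sO.
Qed.

Lemma ext_permM : {morph ext_perm : t1 t2 / (t1 * t2)%g}.
Proof.
by move=> t1 t2; apply: eq_ext_perm => [x|i iS]; rewrite !permM ?ext_perm_val ?ext_perm_out.
Qed.

Lemma ext_perm1 : ext_perm 1%g = 1%g.
Proof. by apply: eq_ext_perm => [x|i _]; rewrite !perm1. Qed.

Lemma ext_perm_tperm a b : ext_perm (tperm a b) = tperm (sv a) (sv b).
Proof.
apply: eq_ext_perm => [x|i iS].
  by rewrite !permE /= !(inj_eq enum_val_inj); case: ifP => //; case: ifP.
rewrite permE /=; case: eqP => [E|_]; first by move: iS; rewrite E enum_valP.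
by case: eqP => [E|//]; move: iS; rewrite E enum_valP.
Qed.

Lemma odd_ext_perm t : odd_perm (ext_perm t) = odd_perm t.
Proof.
have [ts -> _] := prod_tpermP t.
rewrite (big_morph ext_perm ext_permM ext_perm1).
rewrite !(big_morph _ (@odd_permM _) (odd_perm1 _)); apply: eq_bigr => u _.
by rewrite ext_perm_tperm !odd_tperm (inj_eq enum_val_inj).
Qed.

Lemma ext_perm_inj : injective ext_perm.
Proof.
move=> t1 t2 E; apply/permP => x; apply: enum_val_inj.
by rewrite -!ext_perm_val E.
Qed.

Lemma perm_on_ext_perm s : perm_on S s -> exists t, s = ext_perm t.
Proof.
move=> sS; have sv_in x : s (sv x) \in S by rewrite (perm_closed _ sS) enum_valP.
pose h x := enum_rank_in (sv_in x) (s (sv x)).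
have hK x : sv (h x) = s (sv x) by rewrite enum_rankK_in.
have h_inj : injective h by move=> x y /(congr1 sv); rewrite !hK => /perm_inj/enum_val_inj.
exists (perm h_inj); apply/esym/eq_ext_perm => [x|i iS]; first by rewrite permE hK.
exact: out_perm sS iS.
Qed.

End ExtendPerm.

Definition pad_submx (R : pzRingType) n (S : {set 'I_n}) (A : 'M[R]_n) : 'M[R]_n :=
  \matrix_(i, j) if (i \in S) && (j \in S) then A i j else (i == j)%:R.

Lemma det_pad_submx (R : comPzRingType) n (S : {set 'I_n}) (A : 'M[R]_n) :
  \det (pad_submx S A) = \det (principal_submx A S).
Proof.
rewrite /determinant (bigID (perm_on S)) /= [X in _ + X]big1 ?addr0; last first.
  move=> s /subsetPn[i0 /= si0 i0S].
  by rewrite (bigD1 i0) //= mxE (negbTE i0S) eq_sym (negbTE si0) mul0r mulr0.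
rewrite (eq_bigl (mem (@ext_perm _ S @: [set: 'S_#|S|]))) => [|s]; last first.
  apply/idP/imsetP => [/perm_on_ext_perm[t ->]|[t _ ->]]; first by exists t.
  by apply/subsetP => i; rewrite inE; apply: contraR => /ext_perm_out ->; rewrite eqxx.
rewrite big_imset => [|t1 t2 _ _ /ext_perm_inj //] /=.
apply: eq_big => [t|t _]; first by rewrite inE.
rewrite odd_ext_perm; congr (_ * _).
rewrite (bigID (mem S)) /= [X in _ * X]big1 ?mulr1 => [|i iS]; last first.
  by rewrite mxE (negbTE iS) ext_perm_out // eqxx.
rewrite big_enum_val; apply: eq_bigr => x _.
by rewrite !mxE ext_perm_val !enum_valP.
Qed.

Lemma det_diag_add (R : comPzRingType) n (d : 'rV[R]_n) (A : 'M[R]_n) :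
  \det (diag_mx d + A) =
  \sum_(S : {set 'I_n}) (\prod_(i | i \notin S) d 0 i) * \det (principal_submx A S).
Proof.
under [RHS]eq_bigr => S _ do rewrite -det_pad_submx /determinant mulr_sumr.
rewrite /determinant; under [LHS]eq_bigr => s _.
  rewrite (eq_bigr (fun i => A i (s i) + (i == s i)%:R * d 0 i)); last first.
    by move=> i _; rewrite !mxE addrC mulr_natl.
  rewrite (bigA_distr _ _ (fun i => A i (s i))) mulr_sumr.
over.
rewrite exchange_big /=; apply: eq_bigr => S _; apply: eq_bigr => s _.
rewrite mulrCA /pad_submx; congr (_ * _).
have [sS|/subsetPn[i0 /= si0 i0S]] := boolP (perm_on S s); last first.
  rewrite (bigD1 i0) //= [X in _ = _ * X](bigD1 i0) //= mxE (negbTE i0S).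
  by rewrite eq_sym (negbTE si0) !mul0r mulr0.
rewrite [LHS](bigID (mem S)) [X in _ * X](bigID (mem S)) /= mulrCA.
congr (_ * _); first by apply: eq_bigr => i iS; rewrite mxE iS (perm_closed _ sS) iS.
rewrite [X in _ * X]big1 ?mulr1 => [|i iS]; last by rewrite mxE (negbTE iS) (out_perm sS) ?eqxx.
by apply: eq_bigr => i iS; rewrite (negbTE iS) (out_perm sS) // eqxx mul1r.
Qed.

Lemma char_coef_restrE (R : comNzRingType) n k (i : 'I_n) (X : 'M[R]_n) :
  char_coef_restr k i X = (\det (diag_mx (\row_a (a != i)%:R) + 'X *: map_mx polyC X))`_k.
Proof.
rewrite det_diag_add coef_sum /char_coef_restr big_mkcond /=; apply: eq_bigr => S _.
have -> : principal_submx ('X *: map_mx polyC X) S = 'X *: map_mx polyC (principal_submx X S).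
  by apply/matrixP => a b; rewrite !mxE.
have -> : \prod_(a | a \notin S) (\row_a (a != i)%:R : 'rV[{poly R}]_n) 0 a = (i \in S)%:R.
  have [iS|iS] := boolP (i \in S).
    by apply: big1 => a aS; rewrite mxE; case: eqP aS => // ->; rewrite iS.
  by rewrite (bigD1 i) //= mxE eqxx mul0r.
rewrite detZ det_map_mx; case: (i \in S); rewrite ?andbT ?andbF ?mul1r ?mul0r ?coef0 //.
rewrite coefXnM coefC subn_eq0 eq_sym eqn_leq.
by case: ltnP; rewrite ?andbF ?andbT.
Qed.

Lemma det_add_delta (R : comPzRingType) n (A : 'M[R]_n) i c :
  \det (A + c *: delta_mx i i) = \det A + c * cofactor A i i.
Proof.
have cofE j : cofactor (A + c *: delta_mx i i) i j = cofactor A i j.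
  rewrite /cofactor; congr (_ * \det _); apply/matrixP => a b.
  by rewrite !mxE eq_sym (negbTE (neq_lift i a)) mulr0 addr0.
rewrite !(expand_det_row _ i).
under eq_bigr => j _ do rewrite cofE !mxE eqxx mulrDl.
rewrite big_split /= [X in _ + X](bigD1 i) //= [X in _ + (_ + X)]big1 ?addr0 => [|j ji]; last first.
  by rewrite (negbTE ji) mulr0 mul0r.
by rewrite eqxx mulr1.
Qed.

Lemma adj_eq_mulmx (R : idomainType) n (A B : 'M[R]_n) :
  \det A != 0 -> A *m B = (\det A)%:M -> \adj A = B.
Proof.
move=> detA0 AB; have: \det A *: \adj A = \det A *: B.
  by rewrite -mul_mx_scalar -AB mulmxA mul_adj_mx mul_scalar_mx.
by move/matrixP => eqAB; apply/matrixP => a b; have := eqAB a b; rewrite !mxE => /mulfI->.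
Qed.

Lemma det_orthogonal_conj (R : comPzRingType) n (Q A : 'M[R]_n) :
  Q *m Q^T = 1%:M -> \det (Q *m A *m Q^T) = \det A.
Proof.
by move=> QQt; rewrite !det_mulmx mulrAC -det_mulmx QQt det1 mul1r.
Qed.

Lemma adj_orthogonal_diag (R : idomainType) n (Q : 'M[R]_n) (d : 'rV[R]_n) :
  Q *m Q^T = 1%:M -> \prod_j d 0 j != 0 ->
  \adj (Q *m diag_mx d *m Q^T) = Q *m diag_mx (\row_j \prod_(l | l != j) d 0 l) *m Q^T.
Proof.
move=> QQt d0; apply: adj_eq_mulmx; rewrite det_orthogonal_conj // det_diag //.
have QtQ : Q^T *m Q = 1%:M by apply: mulmx1C.
rewrite !mulmxA -[_ *m Q^T *m Q]mulmxA QtQ mulmx1 -[Q *m _ *m _]mulmxA mulmx_diag.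
have -> : \row_j (d 0 j * (\row_j \prod_(l | l != j) d 0 l) 0 j) = const_mx (\prod_l d 0 l).
  by apply/rowP => j; rewrite !mxE [RHS](bigD1 j).
by rewrite diag_const_mx mul_mx_scalar -scalemxAl QQt scalemx1.
Qed.

Lemma cofactor_orthogonal_diag (R : idomainType) n (Q : 'M[R]_n) (d : 'rV[R]_n) i :
  Q *m Q^T = 1%:M -> \prod_j d 0 j != 0 ->
  cofactor (Q *m diag_mx d *m Q^T) i i = \sum_j Q i j ^+ 2 * \prod_(l | l != j) d 0 l.
Proof.
move=> QQt d0; have <- : \adj (Q *m diag_mx d *m Q^T) i i = cofactor (Q *m diag_mx d *m Q^T) i i.
  by rewrite mxE.
rewrite adj_orthogonal_diag // mul_mx_diag mxE; apply: eq_bigr => j _.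
by rewrite !mxE; ring.
Qed.

Lemma orthogonal_row_norm (R : comPzRingType) n (Q : 'M[R]_n) i :
  Q *m Q^T = 1%:M -> \sum_j Q i j ^+ 2 = 1.
Proof.
move=> QQt; have := congr1 (fun M : 'M[R]_n => M i i) QQt; rewrite !mxE eqxx mulr1n => <-.
by apply: eq_bigr => j _; rewrite mxE.
Qed.

Lemma prod_1addZX_neq0 (R : idomainType) (I : finType) (P : pred I) (a : I -> R) :
  \prod_(j | P j) (1 + a j *: 'X) != 0 :> {poly R}.
Proof.
apply/eqP => /(congr1 (horner^~ 0)); rewrite horner_prod hornerC.
under eq_bigr do rewrite hornerD hornerZ hornerX mulr0 addr0 hornerC.
by rewrite prodr_const expr1n => /eqP; rewrite oner_eq0.
Qed.

Lemma punctured_diag_add (R : comNzRingType) n i (A : 'M[R]_n) :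
  diag_mx (\row_a (a != i)%:R) + A = 1%:M + A + (-1) *: delta_mx i i.
Proof.
apply/matrixP => a b; rewrite !mxE; case: (eqVneq a b) => [<-|ab].
  by case: (eqVneq a i) => [->|ai]; rewrite ?eqxx ?(negbTE ai) /= mulr1n; ring.
have -> : (a == i) && (b == i) = false.
  by apply/negP => /andP[/eqP ai /eqP bi]; rewrite ai bi eqxx in ab.
by rewrite mulr0n; ring.
Qed.

Lemma orthogonal_conj_1addZX (R : comNzRingType) n (X Q : 'M[R]_n) (lam : 'rV[R]_n) :
  Q *m Q^T = 1%:M -> X = Q *m diag_mx lam *m Q^T ->
  1%:M + 'X *: map_mx polyC X =
  map_mx polyC Q *m diag_mx (\row_j (1 + lam 0 j *: 'X)) *m (map_mx polyC Q)^T.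
Proof.
move=> QQt XE; rewrite (_ : diag_mx _ = 1%:M + 'X *: map_mx polyC (diag_mx lam)); last first.
  apply/matrixP => a b; rewrite !mxE -mul_polyC.
  by case: eqP => _; rewrite ?mulr1n ?mulr0n ?rmorph0 ?mulr0 ?addr0 // mulrC.
rewrite mulmxDr mulmxDl mulmx1 map_trmx -map_mxM QQt map_mx1 -scalemxAr -scalemxAl.
by rewrite -!map_mxM -XE.
Qed.

Lemma det_punctured_eigen (R : idomainType) n (X Q : 'M[R]_n) (lam : 'rV[R]_n) i :
  Q *m Q^T = 1%:M -> X = Q *m diag_mx lam *m Q^T ->
  \det (diag_mx (\row_a (a != i)%:R) + 'X *: map_mx polyC X) =
  \sum_j (Q i j ^+ 2 * lam 0 j) *: (\prod_(l | l != j) (1 + lam 0 l *: 'X) * 'X).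
Proof.
move=> QQt XE; have QQt_poly : map_mx polyC Q *m (map_mx polyC Q)^T = 1%:M.
  by rewrite map_trmx -map_mxM QQt map_mx1.
pose d := \row_j (1 + lam 0 j *: 'X : {poly R}).
have d0 : \prod_j d 0 j != 0 by under eq_bigr do rewrite mxE; apply: prod_1addZX_neq0.
rewrite punctured_diag_add (orthogonal_conj_1addZX QQt XE) -/d det_add_delta.
rewrite det_orthogonal_conj // cofactor_orthogonal_diag // det_diag mulN1r.
have -> : \prod_j d 0 j = \sum_j (Q i j ^+ 2)%:P * \prod_j d 0 j.
  by rewrite -mulr_suml -rmorph_sum orthogonal_row_norm // mul1r.
rewrite -sumrB; apply: eq_bigr => j _; rewrite (bigD1 j) //= /d.
under eq_bigr do rewrite mxE.
by rewrite !mxE -!mul_polyC rmorphM; ring.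
Qed.

Lemma char_coef_restr_eigen (R : idomainType) n k (X Q : 'M[R]_n) (lam : 'rV[R]_n) i :
  Q *m Q^T = 1%:M -> X = Q *m diag_mx lam *m Q^T ->
  char_coef_restr k i X =
  \sum_j Q i j ^+ 2 * (lam 0 j * (\prod_(l | l != j) (1 + lam 0 l *: 'X) * 'X)`_k).
Proof.
move=> QQt XE; rewrite char_coef_restrE (det_punctured_eigen _ QQt XE) coef_sum.
by apply: eq_bigr => j _; rewrite coefZ mulrA.
Qed.

Section DeflateCoef.
Variable R : comNzRingType.

Lemma coefM_1addZX (p : {poly R}) a m : (p * (1 + a *: 'X))`_m = p`_m + a * (p * 'X)`_m.
Proof. by rewrite mulrDr mulr1 -scalerAr coefD coefZ. Qed.

Fixpoint deflate_coef (p : {poly R}) (a : R) (m : nat) : R :=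
  if m is m'.+1 then p`_m' - a * deflate_coef p a m' else 0.

Lemma deflate_coefE (p q : {poly R}) a m :
  p = q * (1 + a *: 'X) -> deflate_coef p a m = (q * 'X)`_m.
Proof.
move=> ->; elim: m => [|m /= ->]; first by rewrite coefMX.
by rewrite coefM_1addZX addrK coefMX.
Qed.

End DeflateCoef.

Section StraightLinePrograms.
Variable R : fieldType.
Implicit Types (inp acc : seq R) (code : seq (instr R)).

Lemma run_rcons inp code c acc :
  run inp (rcons code c) acc = rcons (run inp code acc) (step inp (run inp code acc) c).
Proof. by elim: code acc => [|c' code IH] acc //=. Qed.

Lemma size_run inp code acc : size (run inp code acc) = (size acc + size code)%N.
Proof. by elim: code acc => [|c code IH] acc /=; rewrite ?addn0 // IH size_rcons addSnnS. Qed.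

Definition refs_below (c : instr R) (p : nat) : bool :=
  match c with
  | IAdd a b | ISub a b | IMul a b | IDiv a b => (a < p)%N && (b < p)%N
  | _ => true
  end.

Definition eval_instr inp (V : nat -> R) (c : instr R) : R :=
  match c with
  | IConst x => x
  | IInput j => nth 0 inp j
  | IAdd a b => V a + V b
  | ISub a b => V a - V b
  | IMul a b => V a * V b
  | IDiv a b => V a / V b
  end.

Lemma nth_run_mkseq inp (code : nat -> instr R) (V : nat -> R) L :
  (forall p, (p < L)%N -> refs_below (code p) p /\ V p = eval_instr inp V (code p)) ->
  forall p, (p < L)%N -> nth 0 (run inp (mkseq code L) [::]) p = V p.
Proof.
elim: L => [|L IH] codeP p //; have {}IH := IH (fun q lt_qL => codeP q (ltnW lt_qL)).
rewrite mkseqS run_rcons nth_rcons size_run size_mkseq ltnS leq_eqVlt.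
case: ltnP => [/IH//|_]; rewrite orbF => /eqP ->; rewrite eqxx.
have [refsL ->] := codeP L (ltnSn L).
by case: (code L) refsL => //= a b /andP[aL bL]; rewrite !IH.
Qed.

End StraightLinePrograms.

Lemma nth_allpairs (T1 T2 U : Type) (x0 : U) (f : T1 -> T2 -> U) s1 s2 i j d1 d2 :
  (i < size s1)%N -> (j < size s2)%N ->
  nth x0 [seq f x1 x2 | x1 <- s1, x2 <- s2] (i * size s2 + j)%N = f (nth d1 s1 i) (nth d2 s2 j).
Proof.
move=> + lt_js2; elim: s1 i => [|x s1 IH] [|i] //= lt_is1.
  by rewrite nth_cat size_map lt_js2 (nth_map d2).
by rewrite nth_cat size_map mulSn -addnA ltnNge leq_addr /= addKn IH.
Qed.

Lemma size_mx_entries (T : Type) m n (A : 'M[T]_(m, n)) : size (mx_entries A) = (m * n)%N.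
Proof. by rewrite size_map -cardT card_prod !card_ord. Qed.

Lemma nth_mx_entries (T : Type) (x0 : T) m n (A : 'M[T]_(m, n)) (i : 'I_m) (j : 'I_n) :
  nth x0 (mx_entries A) (i * n + j)%N = A i j.
Proof.
rewrite (nth_map (i, j)); last first.
  by rewrite -cardT card_prod !card_ord; have := ltn_ord i; have := ltn_ord j; nia.
rewrite enumT unlock /= /prod_enum -[in (i * n)%N](size_enum_ord n).
by rewrite (@nth_allpairs _ _ _ _ _ _ _ i j i j) ?size_enum_ord // !nth_ord_enum.
Qed.

Lemma mulmx_slp_cost (R : fieldType) n (P : slp R) :
  (forall A B : 'M[R]_n, slp_eval P (mx_entries A ++ mx_entries B) = mx_entries (A *m B)) ->
  (n * n <= slp_cost P)%N.
Proof.
case: n => [//|n] mulP; set o := slp_out P.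
have size_o : size o = (n.+1 * n.+1)%N.
  by have := congr1 size (mulP 0 0); rewrite size_map size_mx_entries.
pose out (ij : 'I_n.+1 * 'I_n.+1) := nth 0%N o (ij.1 * n.+1 + ij.2)%N.
pose vals (ij : 'I_n.+1 * 'I_n.+1) :=
  run (mx_entries (delta_mx ij.1 0 : 'M[R]_n.+1) ++ mx_entries (delta_mx 0 ij.2 : 'M[R]_n.+1))
      (slp_code P) [::].
have valsE ij ij' : nth 0 (vals ij) (out ij') = (ij == ij')%:R.
  case: ij ij' => [i j] [i' j'].
  have := congr1 (fun s => nth 0 s (i' * n.+1 + j')%N) (mulP (delta_mx i 0) (delta_mx 0 j)).
  rewrite /slp_eval (nth_map 0%N) -/o ?size_o; last by have := ltn_ord i'; have := ltn_ord j'; nia.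
  rewrite mul_delta_mx nth_mx_entries mxE => ->.
  by rewrite xpair_eqE eq_sym [j == _]eq_sym.
have out_lt ij : (out ij < slp_cost P)%N.
  have := valsE ij ij; rewrite eqxx; case: (ltnP (out ij) (size (vals ij))) => [|le_vals].
    by rewrite size_run.
  by rewrite nth_default // => /eqP; rewrite eq_sym oner_eq0.
have out_inj : injective out.
  move=> ij ij' E; have := valsE ij ij'; rewrite -E valsE eqxx.
  by case: eqP => // _ /eqP; rewrite oner_eq0.
have ord_out_inj : injective (fun ij => Ordinal (out_lt ij)).
  by move=> ij ij' /(congr1 val) /out_inj.
by have := leq_card _ ord_out_inj; rewrite card_prod !card_ord.
Qed.

Section GridProgram.
Variables (R : fieldType) (n k : nat).
Local Notation W := n.+1.

(* The program is laid out on a grid: [pos r s c] is column [c <= n] of row [s < 4] of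
   block [r]. Block 0 loads the [λ_c] and the coefficients of 1; block [l+1] holds the
   coefficients of [∏_(l' <= l) (1 + λ_l' x)]; block [n+1+m] holds in column [j] the
   [m]-th step of the division of [∏_l (1 + λ_l x)] by [1 + λ_j x]; row 3 of block
   [2n+2+i] accumulates [Σ_j Q_ij^2 t_j]. Column [n] reads a [λ_n] beyond the input, which
   is harmless: cell values are specified by the recurrences the program runs, not by
   the polynomials they compute for [j < n]. *)
Definition pos (r s c : nat) : nat := ((4 * r + s) * W + c)%N.

Definition eigval_idx l := (n * n + n * n + l)%N.
Definition qentry_idx i j := (n * n + (i * n + j))%N.

Definition init_instr (s c : nat) : instr R :=
  match s with
  | 0 => IInput R (eigval_idx c)
  | 1 => IConst (c == 0)%:R
  | _ => IConst 0
  end.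

Definition prefix_instr (l s c : nat) : instr R :=
  match s with
  | 0 => if c is c'.+1 then IMul R (pos 0 0 l) (pos l 1 c') else IConst 0
  | 1 => IAdd R (pos l 1 c) (pos l.+1 0 c)
  | _ => IConst 0
  end.

Definition deflate_instr (m s c : nat) : instr R :=
  match s with
  | 0 => if m is m'.+1 then ISub R (pos n 1 m') (pos (n.+1 + m') 1 c) else IConst 0
  | 1 => IMul R (pos 0 0 c) (pos (n.+1 + m) 0 c)
  | _ => IConst 0
  end.

Definition output_instr (i s c : nat) : instr R :=
  let r := (n.+1 + n.+1 + i)%N in
  match s with
  | 0 => IInput R (qentry_idx i c)
  | 1 => IMul R (pos r 0 c) (pos r 0 c)
  | 2 => IMul R (pos r 1 c) (pos (n.+1 + k) 1 c)
  | _ => if c is c'.+1 then IAdd R (pos r 3 c') (pos r 2 c') else IConst 0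
  end.

Definition block_instr (r : nat) : nat -> nat -> instr R :=
  if r == 0%N then init_instr
  else if (r <= n)%N then prefix_instr r.-1
  else if (r <= n.+1 + n)%N then deflate_instr (r - n.+1)
  else output_instr (r - (n.+1 + n.+1)).

Definition decode (p : nat) : nat * nat * nat := (p %/ W %/ 4, p %/ W %% 4, p %% W)%N.

Definition grid_code (p : nat) : instr R :=
  let: (r, s, c) := decode p in block_instr r s c.

Definition grid_size : nat := (4 * (n.+1 + n.+1 + n) * W)%N.

Definition grid_slp : slp R :=
  SLP (mkseq grid_code grid_size) [seq pos (n.+1 + n.+1 + i)%N 3 n | i <- iota 0 n].

Lemma decode_pos r s c : (s < 4)%N -> (c < W)%N -> decode (pos r s c) = (r, s, c).
Proof.
move=> s4 cW; rewrite /decode /pos divnMDl // modnMDl (divn_small cW) (modn_small cW).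
by rewrite addn0 mulnC divnMDl // modnMDl (divn_small s4) (modn_small s4) addn0.
Qed.

Lemma posP p : exists r s c, [/\ p = pos r s c, (s < 4)%N & (c < W)%N].
Proof.
exists (p %/ W %/ 4)%N, (p %/ W %% 4)%N, (p %% W)%N.
by rewrite /pos [(4 * _)%N]mulnC -!divn_eq !ltn_mod.
Qed.

Lemma grid_code_pos r s c : (s < 4)%N -> (c < W)%N -> grid_code (pos r s c) = block_instr r s c.
Proof. by move=> s4 cW; rewrite /grid_code decode_pos. Qed.

Variable inp : seq R.

Definition eigval l := nth 0 inp (eigval_idx l).
Definition qentry i j := nth 0 inp (qentry_idx i j).
Definition prefix_poly l : {poly R} := \prod_(0 <= l' < l) (1 + eigval l' *: 'X).
Definition weight j := eigval j * deflate_coef (prefix_poly n) (eigval j) k.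

Definition init_val (s c : nat) : R :=
  match s with 0 => eigval c | 1 => (c == 0)%:R | _ => 0 end.

Definition prefix_val (l s c : nat) : R :=
  match s with
  | 0 => eigval l * (prefix_poly l * 'X)`_c
  | 1 => (prefix_poly l.+1)`_c
  | _ => 0
  end.

Definition deflate_val (m s c : nat) : R :=
  match s with
  | 0 => deflate_coef (prefix_poly n) (eigval c) m
  | 1 => eigval c * deflate_coef (prefix_poly n) (eigval c) m
  | _ => 0
  end.

Definition output_val (i s c : nat) : R :=
  match s with
  | 0 => qentry i c
  | 1 => qentry i c * qentry i c
  | 2 => qentry i c * qentry i c * weight c
  | _ => \sum_(0 <= j < c) qentry i j * qentry i j * weight j
  end.

Definition block_val (r : nat) : nat -> nat -> R :=
  if r == 0%N then init_val
  else if (r <= n)%N then prefix_val r.-1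
  else if (r <= n.+1 + n)%N then deflate_val (r - n.+1)
  else output_val (r - (n.+1 + n.+1)).

Definition grid_val (p : nat) : R := let: (r, s, c) := decode p in block_val r s c.

Lemma grid_val_pos r s c : (s < 4)%N -> (c < W)%N -> grid_val (pos r s c) = block_val r s c.
Proof. by move=> s4 cW; rewrite /grid_val decode_pos. Qed.

Lemma block_val_prefix l : (l < n)%N -> block_val l.+1 = prefix_val l.
Proof. by move=> ln; rewrite /block_val /= ln. Qed.

Lemma block_val_coef l c : (l <= n)%N -> block_val l 1 c = (prefix_poly l)`_c.
Proof.
case: l => [_|l ln]; first by rewrite /prefix_poly big_geq // coef1.
by rewrite block_val_prefix.
Qed.

Lemma block_val_deflate m : (m <= n)%N -> block_val (n.+1 + m)%N = deflate_val m.
Proof. by move=> mn; rewrite /block_val addSn /= ifF ?ifT ?subSS ?addKn //; lia. Qed.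

Lemma block_val_output i : block_val (n.+1 + n.+1 + i)%N = output_val i.
Proof. by rewrite /block_val /= !ifF ?addKn //; lia. Qed.

Definition cell_ok (c : instr R) (p : nat) (v : R) : Prop :=
  refs_below c p /\ v = eval_instr inp grid_val c.

Lemma init_ok s c : (s < 4)%N -> cell_ok (init_instr s c) (pos 0 s c) (init_val s c).
Proof. by case: s => [|[|s]]. Qed.

Lemma prefix_ok l s c : (l < n)%N -> (s < 4)%N -> (c < W)%N ->
  cell_ok (prefix_instr l s c) (pos l.+1 s c) (prefix_val l s c).
Proof.
move=> ln s4 cW; case: s s4 => [|[|s]] s4 //.
  case: c cW => [|c] cW; first by rewrite /cell_ok /= coefMX mulr0.
  split; first by rewrite /= /pos; lia.
  by rewrite /= !grid_val_pos ?block_val_coef 1?ltnW // coefMX.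
split; first by rewrite /= /pos; lia.
rewrite /= !grid_val_pos // block_val_coef 1?ltnW // block_val_prefix //=.
by rewrite /prefix_poly big_nat_recr //= coefM_1addZX.
Qed.

Lemma deflate_ok m s c : (m <= n)%N -> (s < 4)%N -> (c < W)%N ->
  cell_ok (deflate_instr m s c) (pos (n.+1 + m)%N s c) (deflate_val m s c).
Proof.
move=> mn s4 cW; case: s s4 => [|[|s]] s4 //.
  case: m mn => [|m] mn; first by [].
  split; first by rewrite /= /pos; lia.
  rewrite /= !grid_val_pos //; last by lia.
  by rewrite block_val_coef // block_val_deflate //; lia.
split; first by rewrite /= /pos; lia.
by rewrite /= !grid_val_pos // block_val_deflate.
Qed.

Lemma output_ok i s c : (k <= n)%N -> (s < 4)%N -> (c < W)%N ->
  cell_ok (output_instr i s c) (pos (n.+1 + n.+1 + i)%N s c) (output_val i s c).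
Proof.
move=> kn s4 cW; case: s s4 => [|[|[|[|s]]]] s4 //.
- split; first by rewrite /= /pos; lia.
  by rewrite /= grid_val_pos // block_val_output.
- split; first by rewrite /= /pos; nia.
  by rewrite /= !grid_val_pos // block_val_output block_val_deflate.
case: c cW => [|c] cW; first by rewrite /cell_ok /= big_geq.
split; first by rewrite /= /pos; lia.
by rewrite /= !grid_val_pos // ?block_val_output ?big_nat_recr //; lia.
Qed.

Lemma grid_code_ok : (k <= n)%N ->
  forall p, (p < grid_size)%N -> cell_ok (grid_code p) p (grid_val p).
Proof.
move=> kn p; have [r [s [c [-> s4 cW]]]] := posP p => lt_p.
have r_lt : (r < n.+1 + n.+1 + n)%N.
  have : ((4 * r + s) * W < 4 * (n.+1 + n.+1 + n) * W)%N.
    by apply: leq_ltn_trans lt_p; rewrite /pos leq_addr.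
  by rewrite ltn_pmul2r //; lia.
rewrite grid_code_pos // grid_val_pos //.
rewrite /block_instr /block_val; case: ifP => [/eqP->|r0]; first exact: init_ok.
case: ifP => [rn|nr].
  by rewrite -[X in pos X](prednK (neq0_lt0n r0)); apply: prefix_ok; lia.
case: ifP => [rn2|n2r].
  by rewrite -[X in pos X](subnKC (_ : n.+1 <= r)%N); [apply: deflate_ok|]; lia.
by rewrite -[X in pos X](subnKC (_ : n.+1 + n.+1 <= r)%N); [apply: output_ok|]; lia.
Qed.

Lemma grid_slp_eval : (k <= n)%N ->
  slp_eval grid_slp inp =
  [seq \sum_(0 <= j < n) qentry i j * qentry i j * weight j | i <- iota 0 n].
Proof.
move=> kn; rewrite /slp_eval -map_comp; apply/eq_in_map => i; rewrite mem_iota => /andP[_ lt_in].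
rewrite /= (nth_run_mkseq (grid_code_ok kn)); last by rewrite /grid_size /pos; nia.
by rewrite grid_val_pos // block_val_output.
Qed.

Lemma grid_slp_cost : slp_cost grid_slp = grid_size.
Proof. exact: size_mkseq. Qed.

End GridProgram.

Section Inputs.
Variables (R : fieldType) (n : nat) (X Q : 'M[R]_n) (lambda : 'rV[R]_n).
Local Notation inp := (mx_entries X ++ mx_entries Q ++ mx_entries lambda).

Lemma eigval_input (j : 'I_n) : eigval n inp j = lambda 0 j.
Proof.
rewrite /eigval /eigval_idx nth_cat size_mx_entries ltnNge -addnA leq_addr /= addKn.
rewrite nth_cat size_mx_entries ltnNge leq_addr /= addKn.
by have := nth_mx_entries 0 lambda 0 j; rewrite mul0n add0n.
Qed.

Lemma qentry_input (i j : 'I_n) : qentry n inp i j = Q i j.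
Proof.
rewrite /qentry /qentry_idx nth_cat size_mx_entries ltnNge leq_addr /= addKn.
rewrite nth_cat size_mx_entries (_ : (i * n + j < n * n)%N) ?nth_mx_entries //.
by have := ltn_ord i; have := ltn_ord j; nia.
Qed.

Lemma prefix_poly_input (j : 'I_n) :
  prefix_poly n inp n = \prod_(l | l != j) (1 + lambda 0 l *: 'X) * (1 + lambda 0 j *: 'X).
Proof.
rewrite /prefix_poly big_mkord (bigD1 j) //= mulrC eigval_input.
by congr (_ * _); apply: eq_bigr => l _; rewrite eigval_input.
Qed.

End Inputs.

Theorem mainTheorem11 :
  forall (R : realType) (tau : R), mm_exponent tau ->
  exists C : R, forall n k : nat, (1 <= k)%N -> (k <= n)%N ->
    exists P : slp R,
      (forall (X Q : 'M[R]_n) (lambda : 'rV[R]_n),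
         X^T = X ->
         Q *m Q^T = 1%:M ->
         X = Q *m diag_mx lambda *m Q^T ->
         slp_eval P (mx_entries X ++ mx_entries Q ++ mx_entries lambda)
           = [seq char_coef_restr k i X | i <- enum 'I_n]) /\
      (slp_cost P)%:R <= C * powR n%:R tau.
Proof.
move=> R tau [C mulC]; exists (40%:R * C) => n k k_gt0 kn.
exists (grid_slp R n k); split=> [X Q lambda _ QQt XE|].
  rewrite grid_slp_eval // -val_enum_ord -map_comp; apply: eq_map => i /=.
  rewrite (char_coef_restr_eigen _ _ QQt XE) big_mkord; apply: eq_bigr => j _.
  by rewrite /weight !eigval_input (deflate_coefE _ (prefix_poly_input X Q lambda j)) qentry_input.
have [P [mulP costP]] := mulC n (leq_trans k_gt0 kn).
rewrite grid_slp_cost -mulrA; apply: le_trans (_ : (40 * (n * n))%:R <= _).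
  by rewrite ler_nat /grid_size; nia.
rewrite natrM ler_wpM2l // (le_trans _ costP) // ler_nat.
exact: mulmx_slp_cost mulP.
Qed.
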